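(* Consider proportional reinsurance with $I=1$, $m(t,y,u)=p-q+qu$, $\sigma(t,y,u)=\sigma_0u$, $p<q$, $\sigma_0>0$, and the exponential utility $U(x)=-e^{-\beta x}$ with $\beta>0$. Under the ansatz $V(t,x,y)=U(x)\tilde V(t,y)$, the optimal strategy is $(u^*(t,y),a^*(t,y))$ with $$u^*(t,y)=\begin{cases}0,&(t,y)\in A_0,\\ \dfrac{(\sigma_1(t,y)^2+\sigma_2(t,y)^2)q-\mu(t,y)\sigma_0\sigma_1(t,y)}{\sigma_0^2\sigma_2(t,y)^2\beta},&(t,y)\in(A_0\cup A_1)^c,\\ 1,&(t,y)\in A_1,\end{cases}$$ where $A_0=\{(t,y)\in[0,T]\times\mathbb R: q<\frac{\mu(t,y)\sigma_1(t,y)\sigma_0}{\sigma_1(t,y)^2+\sigma_2(t,y)^2}\}$, $A_1=\{(t,y)\in[0,T]\times\mathbb R: q>\frac{\sigma_0[\sigma_2(t,y)^2\sigma_0\beta+\mu(t,y)\sigma_1(t,y)]}{\sigma_1(t,y)^2+\sigma_2(t,y)^2}\}$, and $$a^*(t,y)=\frac{\mu(t,y)-\beta\sigma_0u^*(t,y)\sigma_1(t,y)}{\beta(\sigma_1(t,y)^2+\sigma_2(t,y)^2)}.$$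
   Context: Independent Brownian motions $W^1,W^2,W^Y$; environmental process $dY_t=\mu_Y(t,Y_t)dt+\sigma_Y(t,Y_t)dW^Y_t$ with bounded Lipschitz $C^1$ coefficients; $\mu,\sigma_1,\sigma_2$ bounded continuous positive Lipschitz functions of $(t,y)$ with $\sigma_1+\sigma_2$ bounded away from zero. With retention $u_t\in[0,1]$ and amount $a_t$ invested in the risky asset, the surplus is $dX_t=\{m(t,Y_t,u_t)+a_t\mu(t,Y_t)\}dt+\{\sigma(t,Y_t,u_t)+a_t\sigma_1(t,Y_t)\}dW^1_t+a_t\sigma_2(t,Y_t)dW^2_t$, and the insurer maximises $\mathbb E[U(X_T)]$ over adapted strategies with $\mathbb E\int_0^Ta_t^2dt<\infty$; $V(t,x,y)$ denotes the value function with HJB equation $0=V_t+\sup_{u,a}[\{m+a\mu\}V_x+\frac12\{(\sigma+a\sigma_1)^2+a^2\sigma_2^2\}V_{xx}]+\mu_YV_y+\frac12\sigma_Y^2V_{yy}$. The optimal strategy here means the maximiser in this HJB equation under the ansatz $V(t,x,y)=U(x)\tilde V(t,y)$ for some function $\tilde V$. *)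

From HB Require Import structures.
From mathcomp Require Import all_boot all_order all_algebra.
From mathcomp Require Import all_classical all_reals all_analysis.
Set Implicit Arguments. Unset Strict Implicit. Unset Printing Implicit Defensive.
Import Order.TTheory GRing.Theory Num.Theory.
Import numFieldNormedType.Exports.
Local Open Scope ring_scope.

Section Defs.
Variable R : realType.

Definition expU (beta x : R) : R := - expR (- (beta * x)).

Definition bdd_pos_lip (f : R -> R -> R) : Prop :=
  (exists M : R, forall t y, `|f t y| <= M) /\
  (forall t y, 0 < f t y) /\
  (exists L : R, forall t y t' y',
      `|f t y - f t' y'| <= L * (`|t - t'| + `|y - y'|)).

(* The expression maximised in the HJB equation, at a point where
   V_x = Vx and V_xx = Vxx and the coefficients are frozen at (t,y):
   {m(u) + a mu} V_x + 1/2 {(sigma(u) + a sigma1)^2 + a^2 sigma2^2} V_xx *)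
Definition hjb_hamiltonian (m sig : R -> R) (mu s1 s2 Vx Vxx u a : R) : R :=
  (m u + a * mu) * Vx
  + 2^-1 * ((sig u + a * s1) ^+ 2 + a ^+ 2 * s2 ^+ 2) * Vxx.

Definition inA0 (q sigma0 mu s1 s2 : R) : bool :=
  q < mu * s1 * sigma0 / (s1 ^+ 2 + s2 ^+ 2).
Definition inA1 (q sigma0 beta mu s1 s2 : R) : bool :=
  q > sigma0 * (s2 ^+ 2 * sigma0 * beta + mu * s1) / (s1 ^+ 2 + s2 ^+ 2).

Definition ustar (q sigma0 beta mu s1 s2 : R) : R :=
  if inA0 q sigma0 mu s1 s2 then 0
  else if inA1 q sigma0 beta mu s1 s2 then 1
  else ((s1 ^+ 2 + s2 ^+ 2) * q - mu * sigma0 * s1)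
        / (sigma0 ^+ 2 * s2 ^+ 2 * beta).

Definition astar (q sigma0 beta mu s1 s2 : R) : R :=
  (mu - beta * sigma0 * ustar q sigma0 beta mu s1 s2 * s1)
  / (beta * (s1 ^+ 2 + s2 ^+ 2)).

End Defs.

From HB Require Import structures.
From mathcomp Require Import all_boot all_order all_algebra.
From mathcomp Require Import all_classical all_reals all_analysis.
From mathcomp Require Import ring lra.
Set Implicit Arguments. Unset Strict Implicit. Unset Printing Implicit Defensive.
Import Order.TTheory GRing.Theory Num.Theory.
Import numFieldNormedType.Exports.
Local Open Scope ring_scope.

(* For exponential utility the ansatz gives V_xx = - beta V_x with V_x > 0,
   so after dividing by V_x the Hamiltonian is a concave quadratic in (u, a).
   Completing the square in a gives the optimal investment for each u, and the
   remaining function of u is a downward parabola whose vertex is the interior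
   formula for u*.  Maximising it over [0, 1] clamps the vertex to [0, 1], and
   the vertex leaves [0, 1] to the left exactly on A_0 and to the right exactly
   on A_1. *)

Section ExpDerivatives.
Variable R : realType.

Lemma derive1_scale_expR (c k : R) :
  derive1 (fun x => c * expR (k * x)) = fun x => c * k * expR (k * x).
Proof.
apply/funext => x; rewrite derive1E.
have d : is_derive x 1 (fun z => c * expR (k * z)) (c * (expR (k * x) * k)).
  apply: is_derive_eq; congr (c * (_ * _)); by rewrite -[RHS]mulr1.
by rewrite derive_val mulrA mulrC mulrA [k * c]mulrC.
Qed.

Lemma derive1_expU_scale (beta C : R) :
  derive1 (fun x => expU beta x * C) = fun x => beta * C * expR (- (beta * x)).
Proof.
have -> : (fun x => expU beta x * C) = fun x => - C * expR (- beta * x).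
  by apply/funext => x; rewrite /expU [- beta * x]mulNr; ring.
rewrite derive1_scale_expR; apply/funext => x; rewrite [- beta * x]mulNr; ring.
Qed.

Lemma derive2_expU_scale (beta C : R) :
  derive1n 2 (fun x => expU beta x * C) =
  fun x => - (beta * derive1 (fun x => expU beta x * C) x).
Proof.
rewrite /derive1n /= derive1_expU_scale.
have -> : (fun x => beta * C * expR (- (beta * x))) =
          fun x => beta * C * expR (- beta * x).
  by apply/funext => x; rewrite mulNr.
rewrite derive1_scale_expR; apply/funext => x; rewrite [- beta * x]mulNr; ring.
Qed.

End ExpDerivatives.

Section Clamp.
Variable R : realFieldType.

Definition clamp01 (c : R) : R := if c < 0 then 0 else if 1 < c then 1 else c.

Lemma clamp01_ge0_le1 (c : R) : 0 <= clamp01 c <= 1.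
Proof.
rewrite /clamp01; case: ltrP => [_|c_ge0]; first by rewrite lexx ler01.
case: ltrP => [_|c_le1]; first by rewrite ler01 lexx.
by rewrite c_ge0 c_le1.
Qed.

Lemma clamp01_nearest (c u : R) : 0 <= u <= 1 ->
  (clamp01 c - c) ^+ 2 <= (u - c) ^+ 2 /\
  ((u - c) ^+ 2 = (clamp01 c - c) ^+ 2 -> u = clamp01 c).
Proof.
move=> /andP[u_ge0 u_le1]; rewrite /clamp01.
case: ltrP => [c_lt0|c_ge0].
  have -> : (u - c) ^+ 2 = (0 - c) ^+ 2 + u * (u - 2 * c) by ring.
  split; first by rewrite lerDl; nra.
  move/eqP; rewrite -subr_eq0 addrAC subrr add0r mulf_eq0.
  by case/orP => /eqP //; lra.
case: ltrP => [c_gt1|c_le1].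
  have -> : (u - c) ^+ 2 = (1 - c) ^+ 2 + (u - 1) * (u + 1 - 2 * c) by ring.
  split; first by rewrite lerDl; nra.
  move/eqP; rewrite -subr_eq0 addrAC subrr add0r mulf_eq0.
  by case/orP => /eqP; lra.
rewrite subrr expr0n /=; split; first exact: sqr_ge0.
by move/eqP; rewrite sqrf_eq0 subr_eq0 => /eqP.
Qed.

End Clamp.

Section Hamiltonian.
Variables (R : realType) (p q sigma0 beta mu s1 s2 D : R).
Hypotheses (sigma0_gt0 : 0 < sigma0) (beta_gt0 : 0 < beta) (s2_gt0 : 0 < s2)
  (D_gt0 : 0 < D).

Let S := s1 ^+ 2 + s2 ^+ 2.
Let Hm (u a : R) :=
  hjb_hamiltonian (fun v : R => p - q + q * v) (fun v : R => sigma0 * v)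
  mu s1 s2 D (- (beta * D)) u a.

Definition uvertex : R :=
  ((s1 ^+ 2 + s2 ^+ 2) * q - mu * sigma0 * s1) / (sigma0 ^+ 2 * s2 ^+ 2 * beta).

Definition abest (u : R) : R :=
  (mu - beta * sigma0 * u * s1) / (beta * (s1 ^+ 2 + s2 ^+ 2)).

Let S_gt0 : 0 < S.
Proof. by rewrite /S ltr_wpDl ?sqr_ge0 ?exprn_gt0. Qed.

Lemma ustar_clamp01 : ustar q sigma0 beta mu s1 s2 = clamp01 uvertex.
Proof.
have hS := S_gt0; have hN : 0 < sigma0 ^+ 2 * s2 ^+ 2 * beta.
  by rewrite !mulr_gt0 ?exprn_gt0.
have A0E : inA0 q sigma0 mu s1 s2 = (uvertex < 0).
  rewrite /inA0 /uvertex ltr_pdivlMr // ltr_pdivrMr // mul0r -/S.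
  by apply/idP/idP => h; lra.
have A1E : inA1 q sigma0 beta mu s1 s2 = (1 < uvertex).
  rewrite /inA1 /uvertex ltr_pdivlMr // ltr_pdivrMr // mul1r -/S.
  by apply/idP/idP => h; lra.
by rewrite /ustar /clamp01 A0E A1E.
Qed.

(* Completing the square, first in a around abest u, then in u around uvertex. *)
Lemma hamiltonian_gap (u a w : R) :
  Hm w (abest w) - Hm u a =
  D * (beta / 2 * S * (a - abest u) ^+ 2 +
       beta * sigma0 ^+ 2 * s2 ^+ 2 / (2 * S) *
         ((u - uvertex) ^+ 2 - (w - uvertex) ^+ 2)).
Proof.
rewrite /Hm /hjb_hamiltonian /abest /uvertex /S; field.
by rewrite (gt_eqF beta_gt0) (gt_eqF s2_gt0) (gt_eqF sigma0_gt0) (gt_eqF S_gt0).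
Qed.

Let gap_coef_gt0 : 0 < beta / 2 * S.
Proof. by rewrite !mulr_gt0 ?invr_gt0 ?S_gt0. Qed.

Let vertex_coef_gt0 : 0 < beta * sigma0 ^+ 2 * s2 ^+ 2 / (2 * S).
Proof. by rewrite !mulr_gt0 ?exprn_gt0 ?invr_gt0 ?mulr_gt0 ?S_gt0. Qed.

Lemma hamiltonian_le_ustar (u a : R) : 0 <= u <= 1 ->
  Hm u a <= Hm (ustar q sigma0 beta mu s1 s2) (astar q sigma0 beta mu s1 s2).
Proof.
move=> /(clamp01_nearest uvertex) [near _].
rewrite -subr_ge0 /astar -/(abest _) ustar_clamp01 hamiltonian_gap.
apply: mulr_ge0; first exact: ltW.
apply: addr_ge0; apply: mulr_ge0.
- exact: ltW gap_coef_gt0.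
- exact: sqr_ge0.
- exact: ltW vertex_coef_gt0.
- by rewrite subr_ge0.
Qed.

Lemma hamiltonian_eq_ustar (u a : R) : 0 <= u <= 1 ->
  Hm u a = Hm (ustar q sigma0 beta mu s1 s2) (astar q sigma0 beta mu s1 s2) ->
  u = ustar q sigma0 beta mu s1 s2 /\ a = astar q sigma0 beta mu s1 s2.
Proof.
move=> /(clamp01_nearest uvertex) [near near_eq].
rewrite /astar -/(abest _) ustar_clamp01 => /esym/eqP; rewrite -subr_eq0.
rewrite hamiltonian_gap mulf_eq0 gt_eqF //= paddr_eq0; first last.
- by apply: mulr_ge0; [exact: ltW vertex_coef_gt0 | rewrite subr_ge0].
- by apply: mulr_ge0; [exact: ltW gap_coef_gt0 | exact: sqr_ge0].
rewrite mulf_eq0 (gt_eqF gap_coef_gt0) sqrf_eq0 subr_eq0.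
rewrite mulf_eq0 (gt_eqF vertex_coef_gt0) subr_eq0 !orFb.
move=> /andP[/eqP -> /eqP u_eq].
by rewrite -(near_eq u_eq).
Qed.

End Hamiltonian.

Theorem corollary5p3 (R : realType) (T : R) (mu sigma1 sigma2 : R -> R -> R)
    (p q sigma0 beta : R) (Vt : R -> R -> R) :
  0 < T ->
  bdd_pos_lip mu -> bdd_pos_lip sigma1 -> bdd_pos_lip sigma2 ->
  (exists c : R, 0 < c /\ forall t y, c <= sigma1 t y + sigma2 t y) ->
  p < q -> 0 < sigma0 -> 0 < beta ->
  forall t y x : R, 0 <= t <= T -> 0 < Vt t y ->
  let V : R -> R := fun x' => expU beta x' * Vt t y in
  let m : R -> R := fun u => p - q + q * u in
  let sig : R -> R := fun u => sigma0 * u in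
  let H : R -> R -> R := fun u a =>
    hjb_hamiltonian m sig (mu t y) (sigma1 t y) (sigma2 t y)
      (derive1 V x) (derive1n 2 V x) u a in
  let us := ustar q sigma0 beta (mu t y) (sigma1 t y) (sigma2 t y) in
  let as_ := astar q sigma0 beta (mu t y) (sigma1 t y) (sigma2 t y) in
  [/\ 0 <= us <= 1,
      (forall u a : R, 0 <= u <= 1 -> H u a <= H us as_) &
      (forall u a : R, 0 <= u <= 1 -> H u a = H us as_ -> u = us /\ a = as_)].
Proof.
move=> _ _ _ [_ [s2_gt0 _]] _ _ sigma0_gt0 beta_gt0 t y x _ Vt_gt0 V m sig H us as_.
have Vx_gt0 : 0 < derive1 V x.
  by rewrite derive1_expU_scale !mulr_gt0 ?expR_gt0.
have HE : H = hjb_hamiltonian m sig (mu t y) (sigma1 t y) (sigma2 t y)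
                (derive1 V x) (- (beta * derive1 V x)).
  by rewrite /H derive2_expU_scale.
rewrite HE; split.
- by rewrite /us ustar_clamp01 // clamp01_ge0_le1.
- by move=> u a; exact: hamiltonian_le_ustar.
- by move=> u a; exact: hamiltonian_eq_ustar.
Qed.
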